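(* Let $\mathcal{G}=(\vec V,\vec E)$ be a DAG and let $V_i,V_j\in\vec V$ be non-adjacent. Then every independence preserving augmentation $(\vec S_i^+,\vec S_j^+)$ of $(V_i,V_j)$ is disjoint from the immoral descendants of $V_i,V_j$: $\operatorname{\mathbf{IMD}}(V_i,V_j)\cap\vec S_i^+=\emptyset$ and $\operatorname{\mathbf{IMD}}(V_i,V_j)\cap\vec S_j^+=\emptyset$.
   Context: For sets $\vec S_i,\vec S_j\subseteq\vec V\setminus\{V_i,V_j\}$, the ordered pair $(\vec S_i^+,\vec S_j^+)=(\vec S_i\cup\{V_i\},\vec S_j\cup\{V_j\})$ is an independence preserving augmentation (IPA) of $(V_i,V_j)$ if there is a set $\vec C\subset\vec V$ (the IPA conditioning set) such that $\vec S_i^+$ and $\vec S_j^+$ are d-separated by $\vec C$ in $\mathcal{G}$. $\operatorname{\mathbf{CH}}(V)$ denotes the children and $\operatorname{\mathbf{DE}}(V)$ the (strict) descendants of $V$ in $\mathcal{G}$; $\operatorname{\mathbf{CH}}(V_i,V_j)=\operatorname{\mathbf{CH}}(V_i)\cap\operatorname{\mathbf{CH}}(V_j)$ and for a set, $\operatorname{\mathbf{DE}}$ of the set is the union of the descendants. The immoral descendants are $\operatorname{\mathbf{IMD}}(V_i,V_j)=\operatorname{\mathbf{CH}}(V_i,V_j)\cup\operatorname{\mathbf{DE}}(\operatorname{\mathbf{CH}}(V_i,V_j))$. *)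

(* a DAG is a finite type of vertices T with a directed edge
   relation E : rel T (E u v means u -> v). *)
From mathcomp Require Import all_boot.
Set Implicit Arguments. Unset Strict Implicit. Unset Printing Implicit Defensive.

Section Graph.
Variables (T : finType) (E : rel T).

Definition desc (u v : T) : bool := [exists w, E u w && connect E w v].

Definition acyclic : Prop := forall v, ~~ desc v v.

Definition adj (u v : T) : bool := E u v || E v u.

Definition CH (v : T) : {set T} := [set w | E v w].
Definition DE (v : T) : {set T} := [set w | desc v w].
Definition DEs (A : {set T}) : {set T} := [set w | [exists c in A, desc c w]].
Definition CH2 (vi vj : T) : {set T} := CH vi :&: CH vj.
Definition IMD (vi vj : T) : {set T} := CH2 vi vj :|: DEs (CH2 vi vj).

Definition collider (a b c : T) : bool := E a b && E c b.

Definition blocked (Z : {set T}) (a b c : T) : bool :=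
  if collider a b c then (b \notin Z) && [forall d, desc b d ==> (d \notin Z)]
  else b \in Z.

(* X and Y are d-separated by Z: every (simple) path in the skeleton from a
   vertex of X to a vertex of Y, represented as the vertex list x :: s, has
   some interior vertex (index k with 0 < k < size s) at which it is blocked. *)
Definition dsep (X Y Z : {set T}) : Prop :=
  forall (x : T) (s : seq T),
    x \in X -> last x s \in Y -> path adj x s -> uniq (x :: s) ->
    exists k : nat, (0 < k < size s) &&
      blocked Z (nth x (x :: s) k.-1) (nth x (x :: s) k) (nth x (x :: s) k.+1).

(* (Si :|: {vi}, Sj :|: {vj}) is an IPA of (vi, vj) *)
Definition IPA (vi vj : T) (Si Sj : {set T}) : Prop :=
  Si \subset ~: [set vi; vj] /\ Sj \subset ~: [set vi; vj] /\
  exists C : {set T}, dsep (vi |: Si) (vj |: Sj) C.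

End Graph.

From mathcomp Require Import all_boot.
From mathcomp Require Import zify.

Set Implicit Arguments.
Unset Strict Implicit.
Unset Printing Implicit Defensive.

(* Let w lie in IMD(vi, vj), reached by a directed path from a common child c
   of vi and vj, and suppose w lies on vj's side of a d-separation by C.  The
   path vi -> c <- vj has the single collider c, so c and all its descendants
   avoid C.  But then the directed path vi -> c ->* w, whose interior vertices
   are non-colliders, is not blocked by C either. *)

Section DSeparation.
Variables (T : finType) (E : rel T).

Lemma blocked_sym Z a b c : blocked E Z a b c = blocked E Z c b a.
Proof. by rewrite /blocked /collider andbC. Qed.

Lemma dsep_sym X Y Z : dsep E X Y Z -> dsep E Y X Z.
Proof.
move=> sepXY y s yY lastX ys_path ys_uniq.
set x := last y s; set s' := rev (belast y s).
have rev_ys : x :: s' = rev (y :: s) by rewrite /x /s' [y :: s]lastI rev_rcons.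
have size_s' : size s' = size s by rewrite size_rev size_belast.
have [|||k /andP[/andP[k_gt0 k_lt] blocked_k]] := sepXY x s' lastX.
- by rewrite (_ : last x s' = last y (x :: s')) // rev_ys rev_cons last_rcons.
- by rewrite rev_path; apply: sub_path ys_path => u v; rewrite /adj orbC.
- by rewrite rev_ys rev_uniq.
rewrite size_s' in k_lt.
exists (size s - k); apply/andP; split; first by lia.
have nth_rev_ys i : i <= size s ->
    nth x (x :: s') i = nth y (y :: s) (size s - i).
  move=> le_i_s; rewrite rev_ys nth_rev /=; last by lia.
  by rewrite (set_nth_default y) /=; [congr nth; lia | lia].
move: blocked_k; rewrite blocked_sym !nth_rev_ys; try lia.
have -> : size s - k.-1 = (size s - k).+1 by lia.
by have -> : size s - k.+1 = (size s - k).-1 by lia.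
Qed.

Lemma connect_desc u v : connect E u v -> (v == u) || desc E u v.
Proof.
case/connectP=> [[|w p]] /= => [_ -> | /andP[Euw wp] ->]; first by rewrite eqxx.
apply/orP; right; apply/existsP; exists w.
by rewrite Euw (path_connect wp) ?mem_last.
Qed.

Lemma IMDC vi vj : IMD E vi vj = IMD E vj vi.
Proof. by rewrite /IMD /CH2 setIC. Qed.

Lemma mem_IMD vi vj w :
  w \in IMD E vi vj -> exists c, [/\ E vi c, E vj c & connect E c w].
Proof.
rewrite /IMD /DEs /CH2 /CH !inE => /orP[/andP[Evi Evj] | ].
  by exists w; rewrite Evi Evj connect0.
case/existsP=> c /andP[]; rewrite !inE => /andP[Evi Evj] /existsP[d /andP[Ecd dw]].
by exists c; split=> //; apply: connect_trans (connect1 Ecd) dw.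
Qed.

Hypothesis E_acyclic : acyclic E.

Lemma acyclic_edge_connect u v : E u v -> ~~ connect E v u.
Proof.
move=> Euv; apply: contraNN (E_acyclic u) => vu.
by apply/existsP; exists v; rewrite Euv.
Qed.

Lemma acyclic_edge_neq u v : E u v -> u != v.
Proof. by move/acyclic_edge_connect; apply: contraNneq => ->. Qed.

Lemma dsep_collider_connect X Y C a b c v :
    dsep E X Y C -> a \in X -> b \in Y -> a != b -> E a c -> E b c ->
  connect E c v -> v \notin C.
Proof.
move=> sepXY aX bY ab Eac Ebc cv.
have [|| k /andP[k_range]] := sepXY a [:: c; b] aX bY.
- by rewrite /= /adj Eac Ebc orbT.
- rewrite /= !inE negb_or ab (acyclic_edge_neq Eac) eq_sym.
  by rewrite (acyclic_edge_neq Ebc).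
have -> : k = 1 by move: k_range => /=; lia.
rewrite /blocked /collider /= Eac Ebc /= => /andP[cC /forallP descC].
by case/predU1P: (connect_desc cv) => [-> | /(implyP (descC v))].
Qed.

(* No vertex of a directed path is a collider on it: E u w && E w u is a
   2-cycle. *)
Lemma dsep_directed_path X Y C a s :
    dsep E X Y C -> a \in X -> last a s \in Y -> path E a s -> uniq (a :: s) ->
  exists2 v, v \in s & v \in C.
Proof.
move=> sepXY aX lastY as_path as_uniq.
have [|//|k /andP[/andP[k_gt0 k_lt]]] := sepXY a s aX lastY.
  by apply: sub_path as_path => u w Euw; rewrite /adj Euw.
case: k k_gt0 k_lt => // k _ k_lt.
have Ek : E (nth a s k) (nth a s k.+1) by apply: (pathP a as_path k.+1).
rewrite /blocked /collider /= ifN; last first.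
  by apply: contraNN (acyclic_edge_connect Ek) => /andP[_ /connect1].
by exists (nth a s k); rewrite // mem_nth // ltnW.
Qed.

Lemma dsep_common_child_connect X Y C a b c w :
    dsep E X Y C -> a \in X -> b \in Y -> a != b -> E a c -> E b c ->
  connect E c w -> w \notin Y.
Proof.
move=> sepXY aX bY ab Eac Ebc /connectP[p0 p0_path ->].
case: (shortenP p0_path) => p cp_path cp_uniq _.
apply/negP=> lastY.
have [||v v_cp vC] := dsep_directed_path (s := c :: p) sepXY aX lastY.
- by rewrite /= Eac.
- rewrite cons_uniq cp_uniq andbT.
  by apply: contraNN (acyclic_edge_connect Eac) => /(path_connect cp_path).
have := dsep_collider_connect sepXY aX bY ab Eac Ebc (path_connect cp_path v_cp).
by rewrite vC.
Qed.

Lemma dsep_IMD_disjoint X Y C a b :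
  dsep E X Y C -> a \in X -> b \in Y -> a != b -> IMD E a b :&: Y = set0.
Proof.
move=> sepXY aX bY ab; apply/setP=> w; rewrite inE in_set0.
apply/andP=> -[/mem_IMD[c [Eac Ebc cw]]].
exact/negP/(dsep_common_child_connect sepXY aX bY ab Eac Ebc cw).
Qed.

End DSeparation.

Theorem lemma5 (T : finType) (E : rel T) (vi vj : T) (Si Sj : {set T}) :
  acyclic E -> vi != vj -> ~~ adj E vi vj ->
  IPA E vi vj Si Sj ->
  IMD E vi vj :&: (vi |: Si) = set0 /\ IMD E vi vj :&: (vj |: Sj) = set0.
Proof.
move=> E_acyclic vi_vj _ [_ [_ [C sepC]]].
have vi_in : vi \in vi |: Si by rewrite setU11.
have vj_in : vj \in vj |: Sj by rewrite setU11.
split; last exact: (dsep_IMD_disjoint E_acyclic sepC vi_in vj_in vi_vj).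
by rewrite IMDC (dsep_IMD_disjoint E_acyclic (dsep_sym sepC) vj_in vi_in) // eq_sym.
Qed.
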